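(* Let $p$ be a prime and $1\le k\le\nu$ integers, and assume that $p$ is odd, or that $p=2$ and $k\ge 2$. Let $\Omega_p^{k,\nu}:=\ker\big((\mathbb{Z}/p^\nu\mathbb{Z})^\times\to(\mathbb{Z}/p^k\mathbb{Z})^\times\big)=\{1+\beta p^k:\beta\in\mathbb{Z}/p^\nu\mathbb{Z}\}$, acting on $\mathbb{Z}/p^\nu\mathbb{Z}$ by multiplication. Then $$H^1(\Omega_p^{k,\nu},\mathbb{Z}/p^\nu\mathbb{Z})=0=H^2(\Omega_p^{k,\nu},\mathbb{Z}/p^\nu\mathbb{Z}).$$
   Context: Group cohomology of the finite group $\Omega_p^{k,\nu}$. *)

From mathcomp Require Import all_boot all_order all_algebra.
Set Implicit Arguments. Unset Strict Implicit. Unset Printing Implicit Defensive.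
Import GRing.Theory.
Local Open Scope ring_scope.

Definition Omega (p k nu : nat) : {set 'Z_(p ^ nu)} :=
  [set x : 'Z_(p ^ nu) | [exists b : 'Z_(p ^ nu), x == 1 + b * (p ^ k)%:R]].

(* A (multiplicative) group G contained in a commutative ring R, acting on the
   additive group of R by multiplication.  Cochains are functions on G
   (values outside G are irrelevant). *)

Definition cocycle1 (R : comNzRingType) (G : {pred R}) (f : R -> R) : Prop :=
  forall g h, g \in G -> h \in G -> f (g * h) = f g + g * f h.
Definition coboundary1 (R : comNzRingType) (G : {pred R}) (f : R -> R) : Prop :=
  exists m : R, forall g, g \in G -> f g = g * m - m.
Definition cocycle2 (R : comNzRingType) (G : {pred R}) (f : R -> R -> R) : Prop :=
  forall g h l, g \in G -> h \in G -> l \in G ->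
    g * f h l - f (g * h) l + f g (h * l) - f g h = 0.
Definition coboundary2 (R : comNzRingType) (G : {pred R}) (f : R -> R -> R) : Prop :=
  exists c : R -> R, forall g h, g \in G -> h \in G ->
    f g h = g * c h - c (g * h) + c g.

Definition H1_trivial (R : comNzRingType) (G : {pred R}) : Prop :=
  forall f, cocycle1 G f -> coboundary1 G f.
Definition H2_trivial (R : comNzRingType) (G : {pred R}) : Prop :=
  forall f, cocycle2 G f -> coboundary2 G f.

From mathcomp Require Import all_boot all_order all_algebra.
From mathcomp Require Import fingroup cyclic finalg zify ring.
Set Implicit Arguments. Unset Strict Implicit. Unset Printing Implicit Defensive.
Import GRing.Theory FinRing.Theory.

(* Omega is cyclic of order n = p^(nu-k), generated by s = 1 + p^k: when p is
   odd or k >= 2, (1 + p^k)^(p^j) = 1 + p^(k+j) u with u prime to p, and the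
   norm N = 1 + s + ... + s^(n-1) is p^(nu-k) times a unit.  For a cyclic group
   acting on M, a 1-cocycle is determined by f(s), subject only to N f(s) = 0,
   and a 2-cocycle is cohomologous to zero as soon as the s-invariant element
   sum_i f(s^i, s) lies in N M; hence H^1 = ker N / (s - 1) M and
   H^2 = M^s / N M.  In Z/p^nu, s - 1 = p^k, so ker N = p^k M = (s - 1) M and
   M^s = ker p^k = p^(nu-k) M = N M. *)

Lemma exp1D_sum_expand a L : exists r1 r2,
  (1 + a) ^ L = 1 + L * a + a ^ 2 * r1 /\
  \sum_(i < L) (1 + a) ^ i = L + 'C(L, 2) * a + a ^ 2 * r2.
Proof.
elim: L => [|L [r1 [r2 [H1 H2]]]].
  by exists 0, 0; rewrite big_ord0 /= !muln0 !addn0.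
exists (r1 + L + a * r1), (r2 + r1); split; first by rewrite expnS H1; ring.
by rewrite big_ord_recr /= H2 H1 binS bin1; ring.
Qed.

Lemma sum_exp1D_prime p m u : prime p -> 0 < m -> odd p || (1 < m) ->
  exists2 w, coprime w p & \sum_(i < p) (1 + p ^ m * u) ^ i = p * w.
Proof.
move=> p_pr m_gt0 p_odd_or_m_gt1.
have [_ [r [_ ->]]] := exp1D_sum_expand (p ^ m * u) p; rewrite -addnA.
suff /dvdnP[z ->] : p ^ 2 %| 'C(p, 2) * (p ^ m * u) + (p ^ m * u) ^ 2 * r.
  exists (1 + p * z); last by ring.
  by rewrite /coprime gcdnC addnC mulnC gcdnMDl gcdn1.
apply: dvdn_add; last by rewrite expnMn -expnM !dvdn_mulr // dvdn_exp2l //; lia.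
have [m_gt1 | m_le1] := ltnP 1 m.
  by rewrite dvdn_mull // dvdn_mulr // dvdn_exp2l.
have -> : m = 1 by lia.
have p_odd : odd p by rewrite ltnNge m_le1 orbF in p_odd_or_m_gt1.
have p_gt2 : 2 < p.
  by move: (prime_gt1 p_pr) p_odd; rewrite leq_eqVlt => /predU1P[<- | ].
by rewrite mulnA dvdn_mulr // dvdn_mul // prime_dvd_bin // p_gt2.
Qed.

Section OnePlusPrimePower.
Variables p k : nat.
Hypotheses (p_pr : prime p) (k_gt0 : 0 < k) (p_odd_or_k_gt1 : odd p || (1 < k)).

Lemma exp1D_pexp j :
  exists2 u, coprime u p & (1 + p ^ k) ^ (p ^ j) = 1 + p ^ (k + j) * u.
Proof.
elim: j => [|j [u u_coprime IHj]].
  by exists 1; rewrite ?coprime1n // addn0 muln1.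
have [||w w_coprime sum_w] := @sum_exp1D_prime p (k + j) u p_pr.
- by rewrite addn_gt0 k_gt0.
- by case/orP: p_odd_or_k_gt1 => [-> // | k_gt1]; rewrite (leq_trans k_gt1) ?leq_addr ?orbT.
exists (u * w); first by rewrite coprimeMl u_coprime.
rewrite expnSr expnM IHj -[LHS]prednK ?expn_gt0 ?addn_gt0 // predn_exp sum_w.
by rewrite addnS expnS /=; ring.
Qed.

Lemma sum_exp1D_pexp j :
  exists2 u, coprime u p & \sum_(i < p ^ j) (1 + p ^ k) ^ i = p ^ j * u.
Proof.
have [u u_coprime E] := exp1D_pexp j; exists u => //.
have := predn_exp (1 + p ^ k) (p ^ j); rewrite E /= expnD -mulnA => /eqP.
by rewrite eqn_pmul2l ?expn_gt0 ?prime_gt0 // => /eqP <-.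
Qed.

End OnePlusPrimePower.
Local Open Scope ring_scope.

Lemma cocycle2_subr_coboundary (R : comNzRingType) (G : {pred R}) f c :
  cocycle2 G f -> cocycle2 G (fun g h => f g h - (g * c h - c (g * h) + c g)).
Proof. by move=> f_cocycle g h l Gg Gh Gl; rewrite -(f_cocycle g h l) // !mulrA; ring. Qed.

Section CyclicCohomology.
Variables (R : comNzRingType) (G : {pred R}) (s : R) (n : nat).
Hypothesis n_gt0 : (0 < n)%N.
Hypothesis eq_expr : forall i j, (s ^+ i == s ^+ j) = (i == j %[mod n]).
Hypothesis expr_in : forall i, s ^+ i \in G.
Hypothesis in_expr : forall g, g \in G -> exists i, g = s ^+ i.

Local Notation norm := (\sum_(i < n) s ^+ i).

Let in_G1 : 1 \in G. Proof. by rewrite -(expr0 s). Qed.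
Let in_Gs : s \in G. Proof. by rewrite -[s]expr1. Qed.

Lemma expr_modn i : s ^+ (i %% n) = s ^+ i.
Proof. by apply/eqP; rewrite eq_expr modn_mod. Qed.

Lemma expr_order : s ^+ n = 1.
Proof. by rewrite -expr_modn modnn. Qed.

Lemma cyclic_H1_trivial :
  (forall x, norm * x = 0 -> exists y, x = (s - 1) * y) -> H1_trivial G.
Proof.
move=> ker_norm f f_cocycle.
have f1 : f 1 = 0.
  have := f_cocycle 1 1 in_G1 in_G1; rewrite !mul1r.
  by move=> /(congr1 (fun x => x - f 1)); rewrite subrr addrK.
have f_expr i : f (s ^+ i) = (\sum_(l < i) s ^+ l) * f s.
  elim: i => [|i IHi]; first by rewrite big_ord0 mul0r expr0 f1.
  by rewrite exprSr f_cocycle // IHi big_ord_recr mulrDl.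
have [m fs] : exists m, f s = (s - 1) * m.
  by apply: ker_norm; rewrite -f_expr expr_order f1.
exists m => _ /in_expr[i ->].
by rewrite f_expr fs mulrA [_ * (s - 1)]mulrC -subrX1 mulrBl mul1r.
Qed.

Lemma cocycle2_sum_fixed f : cocycle2 G f ->
  s * \sum_(i < n) f (s ^+ i) s = \sum_(i < n) f (s ^+ i) s.
Proof.
move=> f_cocycle; pose F i := f (s ^+ i) s; pose H i := f s (s ^+ i).
have sF i : s * F i - F i = (F i.+1 - F i) - (H i.+1 - H i).
  have := f_cocycle _ _ _ in_Gs (expr_in i) in_Gs; rewrite -exprS -exprSr => cocycle_eq.
  by rewrite -[LHS]subr0 -cocycle_eq /F /H; ring.
apply/eqP; rewrite -subr_eq0 mulr_sumr -sumrB.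
rewrite (eq_bigr (fun i : 'I_n => (F i.+1 - F i) - (H i.+1 - H i))) => [|i _]; last exact: sF.
rewrite sumrB -(big_mkord xpredT (fun i => F i.+1 - F i)).
rewrite -(big_mkord xpredT (fun i => H i.+1 - H i)) !telescope_sumr //.
by rewrite /F /H expr_order !expr0 !subrr.
Qed.

Lemma cocycle2_eq0 f : cocycle2 G f -> (forall i, f (s ^+ i) s = 0) ->
  forall g h, g \in G -> h \in G -> f g h = 0.
Proof.
move=> f_cocycle fs.
have f_mulrs i j : f (s ^+ i) (s ^+ j.+1) = f (s ^+ i) (s ^+ j).
  have := f_cocycle _ _ _ (expr_in i) (expr_in j) in_Gs.
  by rewrite -exprSr -exprD !fs mulr0 subrr add0r => /eqP; rewrite subr_eq0 => /eqP.
have f11 : f 1 1 = 0 by have := f_mulrs 0%N 0%N; rewrite expr1 fs expr0.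
have f_1 i : f (s ^+ i) 1 = 0.
  have := f_cocycle _ _ _ (expr_in i) in_G1 in_G1.
  by rewrite !mulr1 f11 mulr0 sub0r addNr sub0r => /eqP; rewrite oppr_eq0 => /eqP.
move=> _ _ /in_expr[i ->] /in_expr[j ->].
by elim: j => [|j IHj]; rewrite ?expr0 ?f_1 // f_mulrs.
Qed.

Let exp_index (x : R) : nat :=
  if [pick i : 'I_n | s ^+ i == x] is Some i then i else 0%N.

Lemma exp_index_expr i : exp_index (s ^+ i) = (i %% n)%N.
Proof.
rewrite /exp_index; case: pickP => [j | none].
  by rewrite eq_expr => /eqP <-; rewrite modn_small.
by have := none (Ordinal (ltn_pmod i n_gt0)); rewrite /= expr_modn eqxx.
Qed.

Lemma cyclic_H2_trivial :
  (forall x, s * x = x -> exists y, x = norm * y) -> H2_trivial G.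
Proof.
move=> fixed_norm f f_cocycle.
pose F i := f (s ^+ i) s.
have [a sumF] := fixed_norm _ (cocycle2_sum_fixed f_cocycle).
(* With [c (s ^+ i) := C i] (so [c s = a]) the coboundary of [c] agrees with
   [f] on every pair [(s ^+ i, s)]; [C] is [n]-periodic exactly because the
   [F i] sum to [norm * a]. *)
pose C i := f 1 1 + \sum_(l < i) (s ^+ l * a - F l).
have CS i : C i.+1 = C i + (s ^+ i * a - F i) by rewrite /C big_ord_recr addrA.
have C0 : C 0%N = f 1 1 by rewrite /C big_ord0 addr0.
have Cn : C n = f 1 1 by rewrite /C sumrB -mulr_suml -sumF subrr addr0.
pose c x := C (exp_index x).
have c_expr i : (i <= n)%N -> c (s ^+ i) = C i.
  rewrite /c exp_index_expr leq_eqVlt => /predU1P[-> | lt_in].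
    by rewrite modnn C0 Cn.
  by rewrite modn_small.
have f1s : f 1 s = f 1 1.
  have := f_cocycle _ _ _ in_G1 in_G1 in_Gs.
  by rewrite !mul1r subrr add0r => /eqP; rewrite subr_eq0 => /eqP.
exists c => g h Gg Gh; apply/eqP; rewrite -subr_eq0; apply/eqP.
apply: (cocycle2_eq0 (cocycle2_subr_coboundary c f_cocycle)) => // i.
rewrite -expr_modn -exprSr -[s in c s]expr1.
have lt_in : (i %% n < n)%N := ltn_pmod i n_gt0.
rewrite !c_expr ?(ltnW lt_in) // CS CS C0 /F expr0 f1s; ring.
Qed.

End CyclicCohomology.

Lemma eq_exprr_mod_order (R : finUnitRingType) (u : {unit R}) i j :
  (val u ^+ i == val u ^+ j) = (i == j %[mod #[u]%g]).
Proof. by rewrite -!val_unitX val_eqE eq_expg_mod_order. Qed.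

Lemma Zp_nat_eq0 m x : (1 < m)%N -> ((x%:R : 'Z_m) == 0) = (m %| x)%N.
Proof. by move=> m_gt1; rewrite -val_eqE /= val_Zp_nat. Qed.

Lemma Zp_mul_eq0 m d e (z : 'Z_m) : (1 < m)%N -> (d * e)%N = m ->
  d%:R * z = 0 -> exists y, z = e%:R * y.
Proof.
move=> m_gt1 de_m; rewrite -[z]natr_Zp -natrM => /eqP.
have d_gt0 : (0 < d)%N.
  by rewrite lt0n; apply: contraTneq m_gt1 => d0; rewrite -de_m d0.
rewrite Zp_nat_eq0 // -[X in (X %| _)%N]de_m dvdn_pmul2l // => /dvdnP[t ->].
by exists t%:R; rewrite natrM mulrC.
Qed.

Section Omega.
Variables p k nu : nat.
Hypotheses (p_pr : prime p) (k_gt0 : (0 < k)%N) (k_le_nu : (k <= nu)%N).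
Hypothesis p_odd_or_k_gt1 : odd p || (1 < k)%N.

Local Notation n := (p ^ (nu - k))%N.
Local Notation s := ((1 + p ^ k)%:R : 'Z_(p ^ nu)).

Let p_gt1 : (1 < p)%N := prime_gt1 p_pr.
Let n_gt0 : (0 < n)%N. Proof. by rewrite expn_gt0 prime_gt0. Qed.

Let n_mul_pk : (n * p ^ k = p ^ nu)%N. Proof. by rewrite -expnD subnK. Qed.

Lemma pexp_gt1 : (1 < p ^ nu)%N.
Proof. by rewrite -{1}(expn0 p) ltn_exp2l // (leq_trans k_gt0). Qed.

Lemma subr1_Omega_gen : s - 1 = (p ^ k)%:R.
Proof. by rewrite natrD addrAC subrr add0r. Qed.

Lemma sum_expr_Omega_gen j : exists2 U : 'Z_(p ^ nu), U \is a GRing.unit &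
  \sum_(i < p ^ j) s ^+ i = (p ^ j)%:R * U.
Proof.
have [u u_coprime sum_u] := sum_exp1D_pexp p_pr k_gt0 p_odd_or_k_gt1 j.
exists u%:R; first by rewrite unitZpE ?pexp_gt1 // coprimeXl // coprime_sym.
by rewrite -natrM -sum_u natr_sum; apply: eq_bigr => i _; rewrite natrX.
Qed.

Lemma expr_pexp_Omega_gen_eq1 j : (s ^+ (p ^ j) == 1) = (nu <= k + j)%N.
Proof.
have [u u_coprime E] := exp1D_pexp p_pr k_gt0 p_odd_or_k_gt1 j.
rewrite -natrX E natrD -subr_eq0 addrAC subrr add0r Zp_nat_eq0 ?pexp_gt1 //.
by rewrite Gauss_dvdl ?dvdn_Pexp2l // coprimeXl // coprime_sym.
Qed.

Lemma unit_Omega_gen : s \is a GRing.unit.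
Proof.
rewrite unitZpE ?pexp_gt1 // coprimeXl // prime_coprime // dvdn_addl.
  by rewrite dvdn1 neq_ltn p_gt1 orbT.
exact: dvdn_exp k_gt0 (dvdnn p).
Qed.

Definition Omega_gen : {unit 'Z_(p ^ nu)} := FinRing.unit _ unit_Omega_gen.

Lemma order_Omega_gen : #[Omega_gen]%g = n.
Proof.
have : (#[Omega_gen]%g %| n)%N.
  by rewrite order_dvdn -val_eqE val_unitX expr_pexp_Omega_gen_eq1 subnKC.
case/(dvdn_pfactor _ _ p_pr) => e e_le def_order; rewrite def_order.
have /eqP := expg_order Omega_gen; rewrite def_order -val_eqE val_unitX.
rewrite expr_pexp_Omega_gen_eq1 -leq_subLR => e_ge.
by have /eqP-> : e == (nu - k)%N by rewrite eqn_leq e_le e_ge.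
Qed.

Lemma eq_expr_Omega_gen i j : (s ^+ i == s ^+ j) = (i == j %[mod n]).
Proof. by rewrite -order_Omega_gen -eq_exprr_mod_order. Qed.

Lemma expr_Omega_gen_in i : s ^+ i \in Omega p k nu.
Proof.
rewrite inE; apply/existsP; exists (\sum_(l < i) s ^+ l).
by rewrite mulrC -subr1_Omega_gen -subrX1 addrC subrK.
Qed.

Lemma Omega_exprE : Omega p k nu = [set s ^+ i | i : 'I_n].
Proof.
apply/esym/eqP; rewrite eqEcard; apply/andP; split.
  by apply/subsetP => _ /imsetP[i _ ->]; apply: expr_Omega_gen_in.
rewrite card_imset; last first.
  move=> i j /eqP; rewrite eq_expr_Omega_gen !modn_small // => /eqP; exact: val_inj.
have sub_affine : Omega p k nu \subset [set 1 + (b : nat)%:R * (p ^ k)%:R | b : 'I_n].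
  apply/subsetP => x; rewrite inE => /existsP[b /eqP ->]; apply/imsetP.
  exists (Ordinal (ltn_pmod b n_gt0)) => //=; congr (_ + _).
  rewrite -{1}[b]natr_Zp (divn_eq b n) natrD !mulrDl -natrM -mulnA -expnD subnK //.
  by rewrite natrM pchar_Zp ?pexp_gt1 // mulr0 add0r modnMDl modn_mod.
exact: leq_trans (subset_leq_card sub_affine) (leq_imset_card _ _).
Qed.

Lemma Omega_H1_trivial : H1_trivial (mem (Omega p k nu)).
Proof.
apply: (cyclic_H1_trivial eq_expr_Omega_gen expr_Omega_gen_in).
  by move=> g; rewrite Omega_exprE => /imsetP[i _ ->]; exists i.
move=> x; have [U U_unit ->] := sum_expr_Omega_gen (nu - k); rewrite -mulrA => Ux0.
have [y Uxy] := Zp_mul_eq0 pexp_gt1 n_mul_pk Ux0.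
by exists (U^-1 * y); rewrite subr1_Omega_gen mulrCA -Uxy mulKr.
Qed.

Lemma Omega_H2_trivial : H2_trivial (mem (Omega p k nu)).
Proof.
apply: (cyclic_H2_trivial n_gt0 eq_expr_Omega_gen expr_Omega_gen_in).
  by move=> g; rewrite Omega_exprE => /imsetP[i _ ->]; exists i.
move=> x sx; have [U U_unit ->] := sum_expr_Omega_gen (nu - k).
have px0 : (p ^ k)%:R * x = 0 by rewrite -subr1_Omega_gen mulrBl sx mul1r subrr.
have [y ->] := Zp_mul_eq0 pexp_gt1 (etrans (mulnC _ _) n_mul_pk) px0.
by exists (U^-1 * y); rewrite mulrA mulrK.
Qed.

End Omega.

Theorem lemma2p4 (p k nu : nat) :
  prime p -> (1 <= k)%N -> (k <= nu)%N -> (odd p \/ (p = 2 /\ (2 <= k)%N)) ->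
  H1_trivial (mem (Omega p k nu)) /\ H2_trivial (mem (Omega p k nu)).
Proof.
move=> p_pr k_gt0 k_le_nu p_odd_or_k_ge2.
have p_odd_or_k_gt1 : odd p || (1 < k)%N.
  by case: p_odd_or_k_ge2 => [-> | [_ ->]]; rewrite ?orbT.
by split; [apply: Omega_H1_trivial | apply: Omega_H2_trivial].
Qed.
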